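(* Let $f:\mathbb Z^m\to\mathbb R^N$ be a discrete isothermic net. Then there exists a function $s:\mathbb Z^m\to\mathbb R\setminus\{0\}$ such that for every elementary quadrilateral $(f,f_i,f_{ij},f_j)$ with diagonal intersection point $M$, $$\frac{l(M,f_{ij})}{l(M,f)}=\frac{s_{ij}}{s},\qquad \frac{l(M,f_j)}{l(M,f_i)}=\frac{s_j}{s_i};$$ $s$ is unique up to multiplication by a nonzero constant $\lambda$ on black points and a nonzero constant $\mu$ on white points. For any such $s$, the functions $\alpha_i=\dfrac{|f_i-f|^2}{s s_i}$ (assigned to the edge $(u,u+e_i)$) form an edge labelling, i.e. $\tau_j\alpha_i=\alpha_i$ for $j\ne i$, so that $$|f_i-f|^2=\alpha_i\, s s_i\qquad(i=1,\dots,m).$$ Replacing $s$ by $\lambda s$ on black points and $\mu s$ on white points replaces $\alpha$ by $(\lambda\mu)^{-1}\alpha$.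
   Context: Notation: for $f:\mathbb Z^m\to\mathbb R^N$, $f=f(u)$, $f_i=f(u+e_i)$, $f_{ij}=f(u+e_i+e_j)$ with $e_i$ the unit vectors, similarly for $s$; $\tau_j g(u)=g(u+e_j)$. A Q-net is a map such that each elementary quadrilateral $(f,f_i,f_{ij},f_j)$ ($i\ne j$) is planar, assumed non-degenerate (distinct vertices, no three collinear, diagonals meeting in a point $M$ distinct from the vertices). Two planar quadrilaterals $(A,B,C,D)$, $(A^*,B^*,C^*,D^* )$ are dual if $A^*B^*\parallel AB$, $B^*C^*\parallel BC$, $C^*D^*\parallel CD$, $D^*A^*\parallel DA$, $A^*C^*\parallel BD$, $B^*D^*\parallel AC$. A Q-net $f$ is a discrete Koenigs net if there is a Q-net $f^*$ with every $(f^*,f^*_i,f^*_{ij},f^*_j)$ dual to $(f,f_i,f_{ij},f_j)$. A circular net is a Q-net all of whose elementary quadrilaterals have their four vertices on a circle. A discrete isothermic net is a circular net which is a discrete Koenigs net. For collinear points $P,Q$, $l(P,Q)$ is the directed (signed) length along their line. A point $u$ is black if $u_1+\dots+u_m$ is even, white otherwise. An edge labelling is a system of real functions $\alpha_i$ on the edges parallel to the $i$-th axis, taking equal values on opposite edges of every elementary square. *)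

From HB Require Import structures.
From mathcomp Require Import all_boot all_order all_algebra.
Set Implicit Arguments. Unset Strict Implicit. Unset Printing Implicit Defensive.
Import Order.TTheory GRing.Theory Num.Theory.
Local Open Scope ring_scope.

Section Defs.
Variables (R : realFieldType) (m N : nat).
Notation pt := 'rV[R]_N.
Notation lat := 'rV[int]_m.

Definition e (i : 'I_m) : lat := delta_mx 0 i.

Definition dot (x y : pt) : R := (x *m y^T) 0 0.
Definition sqnorm (x : pt) : R := dot x x.

Definition collinear (P Q S : pt) : Prop := (\rank (col_mx (Q - P) (S - P)) <= 1)%N.
Definition parallel (x y : pt) : Prop := (\rank (col_mx x y) <= 1)%N.

Definition planar (A B C D : pt) : Prop :=
  (\rank (col_mx (B - A) (col_mx (C - A) (D - A))) <= 2)%N.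

Definition diag_point (A B C D M : pt) : Prop := collinear A C M /\ collinear B D M.

Definition nondegenerate (A B C D : pt) : Prop :=
  [/\ (A <> B /\ A <> C /\ A <> D /\ B <> C /\ B <> D /\ C <> D),
      [/\ ~ collinear A B C, ~ collinear A B D, ~ collinear A C D & ~ collinear B C D] &
      exists M, [/\ diag_point A B C D M, M <> A, M <> B, M <> C & M <> D]].

Definition Qnet (f : lat -> pt) : Prop :=
  forall (u : lat) (i j : 'I_m), i != j ->
    planar (f u) (f (u + e i)) (f (u + e i + e j)) (f (u + e j)) /\
    nondegenerate (f u) (f (u + e i)) (f (u + e i + e j)) (f (u + e j)).

Definition dual_quads (A B C D A' B' C' D' : pt) : Prop :=
  parallel (B' - A') (B - A) /\ parallel (C' - B') (C - B) /\
  parallel (D' - C') (D - C) /\ parallel (A' - D') (A - D) /\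
  parallel (C' - A') (D - B) /\ parallel (D' - B') (C - A).

Definition koenigs (f : lat -> pt) : Prop :=
  Qnet f /\ exists fs : lat -> pt, Qnet fs /\
    forall (u : lat) (i j : 'I_m), i != j ->
      dual_quads (f u) (f (u + e i)) (f (u + e i + e j)) (f (u + e j))
                 (fs u) (fs (u + e i)) (fs (u + e i + e j)) (fs (u + e j)).

(* four points lie on a circle: a point of their affine hull is equidistant *)
Definition concyclic (A B C D : pt) : Prop :=
  exists (x y z r : R),
    let c := A + x *: (B - A) + y *: (C - A) + z *: (D - A) in
    [/\ sqnorm (A - c) = r, sqnorm (B - c) = r, sqnorm (C - c) = r & sqnorm (D - c) = r].

Definition circular (f : lat -> pt) : Prop :=
  Qnet f /\ forall (u : lat) (i j : 'I_m), i != j ->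
    concyclic (f u) (f (u + e i)) (f (u + e i + e j)) (f (u + e j)).

Definition isothermic (f : lat -> pt) : Prop := circular f /\ koenigs f.

Definition black (u : lat) : bool := (2 %| \sum_(k < m) u 0 k)%Z.

(* The ratio conditions l(M,f_ij)/l(M,f) = s_ij/s and l(M,f_j)/l(M,f_i) = s_j/s_i,
   written as the corresponding identities between collinear vectors. *)
Definition diag_ratio (f : lat -> pt) (s : lat -> R) : Prop :=
  forall (u : lat) (i j : 'I_m), i != j -> forall M : pt,
    diag_point (f u) (f (u + e i)) (f (u + e i + e j)) (f (u + e j)) M ->
    f (u + e i + e j) - M = (s (u + e i + e j) / s u) *: (f u - M) /\
    f (u + e j) - M = (s (u + e j) / s (u + e i)) *: (f (u + e i) - M).

Definition alpha (f : lat -> pt) (s : lat -> R) (i : 'I_m) (u : lat) : R :=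
  sqnorm (f (u + e i) - f u) / (s u * s (u + e i)).

Definition edge_labelling (a : 'I_m -> lat -> R) : Prop :=
  forall (i j : 'I_m) (u : lat), i != j -> a i (u + e j) = a i u.

Definition rescale (s : lat -> R) (lam mu : R) : lat -> R :=
  fun u => (if black u then lam else mu) * s u.

End Defs.

(* Let f be isothermic with Koenigs dual fs.  Since the edges of
   fs are parallel to those of f, fs_i - fs = c_i (f_i - f) for nonzero edge
   coefficients c_i.  Working in affine coordinates of a non-degenerate planar
   quadrilateral (A, B, C, D) with C - A = al (B - A) + be (D - A), closing the
   dual quadrilateral and one of its diagonals shows that its edge factors
   c1, c2, c3, c4 (on AB, BC, DC, AD) satisfy c1 c3 = c2 c4 and that the
   diagonals meet at M with C - M = (c1/c2)(A - M), D - M = (c2/c3)(B - M)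
   ([koenigs_quad]); on the net, c_i(u) c_i(u + e_j) = c_j(u) c_j(u + e_i).
   This identity says that h_i = c_i on black and c_i^-1 on white points is
   a closed multiplicative 1-form on Z^m; it is integrated coordinate by
   coordinate ([closed_form_integrable]) and yields the scale function nu with
   nu nu_i c_i = 1, whose quotients are exactly the diagonal ratios.  Any other
   scale function s' has s'/nu invariant under diagonal steps and symmetric in
   the neighbours, hence constant on black and on white points.  Finally the
   intersecting chords theorem for the circumscribed circle gives
   |f_ij - f_j|^2 = (s_ij/s)(s_j/s_i)|f_i - f|^2, i.e. alpha_i is an edge
   labelling. *)

From Pilot Require Import Defs.
From HB Require Import structures.
From mathcomp Require Import all_boot all_order all_algebra.
From mathcomp Require Import ring lra zify.
From Stdlib Require Import FunctionalExtensionality.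
Import Order.TTheory GRing.Theory Num.Theory.
Local Open Scope ring_scope.
Set Implicit Arguments. Unset Strict Implicit. Unset Printing Implicit Defensive.

Ltac vec_ring := apply/rowP => ?; rewrite !mxE; ring.

Section InnerProduct.
Variables (R : realFieldType) (N : nat).
Implicit Types (x y z : 'rV[R]_N).

Lemma dotC x y : dot x y = dot y x.
Proof. by rewrite /dot -{1}(trmxK x) -trmx_mul mxE. Qed.

Lemma dotDl x y z : dot (x + y) z = dot x z + dot y z.
Proof. by rewrite /dot mulmxDl mxE. Qed.

Lemma dotZl (k : R) x y : dot (k *: x) y = k * dot x y.
Proof. by rewrite /dot -scalemxAl mxE. Qed.

Lemma dotDr x y z : dot x (y + z) = dot x y + dot x z.
Proof. by rewrite dotC dotDl !(dotC x). Qed.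

Lemma dotZr (k : R) x y : dot x (k *: y) = k * dot x y.
Proof. by rewrite dotC dotZl dotC. Qed.

Lemma dotNl x y : dot (- x) y = - dot x y.
Proof. by rewrite -scaleN1r dotZl mulN1r. Qed.

Lemma dotNr x y : dot x (- y) = - dot x y.
Proof. by rewrite dotC dotNl dotC. Qed.

Lemma sqnorm_eq0 x : (sqnorm x == 0) = (x == 0).
Proof.
apply/idP/eqP => [|->]; last by rewrite /sqnorm /dot mul0mx mxE.
rewrite /sqnorm /dot mxE psumr_eq0 => [/allP x0|k _]; last first.
  by rewrite mxE -expr2 sqr_ge0.
apply/rowP => k; apply/eqP; rewrite mxE -sqrf_eq0.
by have := x0 k (mem_index_enum _); rewrite mxE -expr2.
Qed.

End InnerProduct.

Section Rank.
Variables (R : realFieldType) (N : nat).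
Implicit Types (x y z : 'rV[R]_N).

Lemma diff_neq0 x y : x != y -> y - x != 0.
Proof. by rewrite subr_eq0 eq_sym. Qed.

Lemma scalel_inj (k1 k2 : R) x : x != 0 -> k1 *: x = k2 *: x -> k1 = k2.
Proof.
move=> x0 /eqP; rewrite -subr_eq0 -scalerBl scaler_eq0 (negbTE x0) orbF subr_eq0.
by move/eqP.
Qed.

Lemma parallel_sym x y : parallel x y -> parallel y x.
Proof. by rewrite /parallel -!addsmxE addsmxC. Qed.

Lemma parallel_scale x y : y != 0 -> parallel x y -> exists k, x = k *: y.
Proof.
move=> y0 hxy.
have yS : (y <= col_mx x y)%MS by rewrite -addsmxE addsmxSr.
have : (col_mx x y <= y)%MS.
  by rewrite -(mxrank_leqif_sup yS).2 eqn_leq mxrankS //= rank_rV y0.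
rewrite col_mx_sub => /andP[/submxP[D ->] _]; exists (D 0 0).
by rewrite {1}(mx11_scalar D) mul_scalar_mx.
Qed.

Lemma parallel_coef x y : y != 0 -> parallel x y -> x = (dot x y / sqnorm y) *: y.
Proof.
move=> y0 /(parallel_scale y0) [k ->].
by rewrite dotZl /sqnorm mulfK // sqnorm_eq0.
Qed.

Lemma parallel_scaled (k : R) y : parallel (k *: y) y.
Proof.
rewrite /parallel; apply: leq_trans (rank_leq_row y).
by apply: mxrankS; rewrite col_mx_sub scalemx_sub ?submx_refl.
Qed.

Lemma nonparallel_indep x y : ~ parallel x y ->
  forall kx ky : R, kx *: x + ky *: y = 0 -> kx = 0 /\ ky = 0.
Proof.
move=> nxy kx ky h.
have kx0 : kx = 0.
  have [//|kxn] := eqVneq kx 0; case: nxy.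
  have ex : kx *: x = (- ky) *: y by rewrite scaleNr; apply/eqP; rewrite -subr_eq0 opprK h.
  have -> : x = (- ky / kx) *: y by rewrite mulrC -scalerA -ex scalerA mulVf // scale1r.
  exact: parallel_scaled.
split=> //; move: h; rewrite kx0 scale0r add0r => /eqP.
rewrite scaler_eq0 => /orP[/eqP // | /eqP y0].
by case: nxy; rewrite y0; apply: parallel_sym; have := parallel_scaled 0 x; rewrite scale0r.
Qed.

Lemma planar_coords x y z : ~ parallel x y -> (\rank (col_mx x (col_mx z y)) <= 2)%N ->
  exists a b : R, z = a *: x + b *: y.
Proof.
move=> nxy hr.
have r2 : \rank (col_mx x y) = 2%N.
  by apply/eqP; rewrite eqn_leq rank_leq_row ltnNge; apply/negP.
have [xS zyS] : (x <= col_mx x (col_mx z y))%MS /\ (col_mx z y <= col_mx x (col_mx z y))%MS.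
  by apply/andP; rewrite -col_mx_sub submx_refl.
have [zS yS] : (z <= col_mx z y)%MS /\ (y <= col_mx z y)%MS.
  by apply/andP; rewrite -col_mx_sub submx_refl.
have sub : (col_mx x y <= col_mx x (col_mx z y))%MS.
  by rewrite col_mx_sub xS (submx_trans yS zyS).
have : (z <= col_mx x y)%MS.
  apply: submx_trans (submx_trans zS zyS) _.
  by rewrite -(mxrank_leqif_sup sub).2 eqn_leq mxrankS // r2 hr.
case/submxP => D ->; rewrite -[D]hsubmxK mul_row_col.
exists (lsubmx D 0 0), (rsubmx D 0 0).
by rewrite {1}(mx11_scalar (lsubmx D)) {1}(mx11_scalar (rsubmx D)) !mul_scalar_mx.
Qed.
End Rank.

Section Quadrilateral.
Variables (R : realFieldType) (N : nat).
Implicit Types A B C D M : 'rV[R]_N.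

Lemma quad_diag_neq0 A B D : ~ parallel (B - A) (D - A) -> D - B != 0.
Proof.
move=> nab; apply/eqP => DB0; apply: nab.
rewrite (_ : D - A = 1 *: (B - A)); first exact: parallel_sym (parallel_scaled _ _).
by rewrite scale1r -[D](subrK B) DB0 add0r.
Qed.

(* Affine coordinates of C in the frame (A; B - A, D - A); both are nonzero
   because no three vertices are collinear. *)
Lemma quad_coords A B C D : planar A B C D -> Defs.nondegenerate A B C D ->
  exists al be : R, [/\ C - A = al *: (B - A) + be *: (D - A), al != 0 & be != 0].
Proof.
move=> hpl [_ [nABC nABD nACD _] _].
have [al [be eC]] := planar_coords nABD hpl.
exists al, be; split=> //; apply/eqP => coef0.
- by apply: nACD; rewrite /collinear eC coef0 scale0r add0r; apply: parallel_scaled.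
- apply: nABC; rewrite /collinear eC coef0 scale0r addr0.
  exact: parallel_sym (parallel_scaled _ _).
Qed.

Lemma diag_ratios A B C D M (al be : R) : ~ parallel (B - A) (D - A) ->
  C - A = al *: (B - A) + be *: (D - A) -> al != 0 -> be != 0 ->
  diag_point A B C D M ->
  C - M = (1 - al - be) *: (A - M) /\ D - M = (- al / be) *: (B - M).
Proof.
move=> nab eC hal hbe [hACM hBDM].
have indep := nonparallel_indep nab.
have nCA : C - A != 0.
  by apply/eqP => CA0; move: eC; rewrite CA0 => /esym/indep[al0 _]; rewrite al0 eqxx in hal.
have nDB := quad_diag_neq0 nab.
have [t eM] := parallel_scale nCA (parallel_sym hACM).
have [tau eM'] := parallel_scale nDB (parallel_sym hBDM).
have [h1 h2] : 1 - t * al - tau = 0 /\ tau - t * be = 0.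
  apply: indep; transitivity ((M - A) - t *: (C - A) - ((M - B) - tau *: (D - B))).
    by rewrite eC; vec_ring.
  by rewrite eM eM' !subrr.
have eCM : C - M = (1 - t) *: (C - A) by rewrite scalerBl scale1r -eM; vec_ring.
have eAM : A - M = (- t) *: (C - A) by rewrite scaleNr -eM; vec_ring.
have eDM : D - M = (1 - tau) *: (D - B) by rewrite scalerBl scale1r -eM'; vec_ring.
have eBM : B - M = (- tau) *: (D - B) by rewrite scaleNr -eM'; vec_ring.
rewrite eCM eAM eDM eBM !scalerA; split; congr (_ *: _); first lra.
have etau : tau = t * be by lra.
rewrite etau (_ : - al / be * - (t * be) = al * t); first lra.
by field.
Qed.

Lemma dual_edge_coefs A B C D A' B' C' D' (al be c1 c2 c3 c4 : R) :
  ~ parallel (B - A) (D - A) -> C - A = al *: (B - A) + be *: (D - A) -> al != 0 ->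
  B' - A' = c1 *: (B - A) -> C' - B' = c2 *: (C - B) ->
  C' - D' = c3 *: (C - D) -> D' - A' = c4 *: (D - A) ->
  parallel (C' - A') (D - B) ->
  [/\ c1 = (1 - al - be) * c2, c3 = - (c2 * be) / al & c4 = c2 * be + (1 - be) * c3].
Proof.
move=> nab eC hal hB hC hC' hD hdiag.
have indep := nonparallel_indep nab.
have nDB := quad_diag_neq0 nab.
have eC2 : C = A + (al *: (B - A) + be *: (D - A)) by rewrite -eC addrC subrK.
have [k ek] := parallel_scale nDB hdiag.
have [d1 d2] : c1 + c2 * (al - 1) + k = 0 /\ c2 * be - k = 0.
  apply: indep; transitivity ((B' - A') + (C' - B') - k *: (D - B)).
    by rewrite hB hC eC2; vec_ring.
  by rewrite -ek; vec_ring.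
have [e1 e2] : c1 + c2 * (al - 1) - c3 * al = 0 /\ c2 * be - c3 * (be - 1) - c4 = 0.
  apply: indep; transitivity ((B' - A') + (C' - B') - (C' - D') - (D' - A')).
    by rewrite hB hC hC' hD eC2; vec_ring.
  by vec_ring.
split; first lra; last lra.
by apply: (mulIf hal); rewrite divfK //; lra.
Qed.

Lemma koenigs_quad A B C D A' B' C' D' (c1 c2 c3 c4 : R) :
  planar A B C D -> Defs.nondegenerate A B C D ->
  B' - A' = c1 *: (B - A) -> C' - B' = c2 *: (C - B) ->
  C' - D' = c3 *: (C - D) -> D' - A' = c4 *: (D - A) ->
  parallel (C' - A') (D - B) -> c2 != 0 -> c3 != 0 ->
  c1 * c3 = c2 * c4 /\
  forall M, diag_point A B C D M ->
    C - M = (c1 / c2) *: (A - M) /\ D - M = (c2 / c3) *: (B - M).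
Proof.
move=> hpl hnd hB hC hC' hD hdiag hc2 hc3.
have nab : ~ parallel (B - A) (D - A) by case: hnd => _ [].
have [al [be [eC hal hbe]]] := quad_coords hpl hnd.
have [e1 e3 e4] := dual_edge_coefs nab eC hal hB hC hC' hD hdiag.
split; first by rewrite e4 e3 e1; field.
move=> M hM; have [-> ->] := diag_ratios nab eC hal hbe hM.
split; congr (_ *: _); first by rewrite e1; field.
by rewrite e3; field; rewrite hal hbe hc2.
Qed.
End Quadrilateral.

Section Circle.
Variables (R : realFieldType) (N : nat).
Implicit Types A B C D M P Q c : 'rV[R]_N.

Lemma chord_power P Q M c (r t : R) :
  sqnorm (P - c) = r -> sqnorm (Q - c) = r -> M - P = t *: (Q - P) ->
  dot (P - M) (Q - M) = sqnorm (M - c) - r.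
Proof.
move=> hP hQ hM.
have eM : M = P + t *: (Q - P) by rewrite -hM addrC subrK.
have -> : P - M = (- t) *: (Q - P) by rewrite eM; vec_ring.
have -> : Q - M = (1 - t) *: (Q - P) by rewrite eM; vec_ring.
have -> : M - c = (P - c) + t *: (Q - P) by rewrite eM; vec_ring.
have eQ : Q - c = (P - c) + (Q - P) by vec_ring.
rewrite -hP; rewrite eQ -hP in hQ; move: (P - c) (Q - P) hQ => u w.
rewrite /sqnorm !(dotDl, dotDr, dotZl, dotZr) (dotC w u) => huw.
have -> : dot w w = - (dot u w + dot u w) by lra.
ring.
Qed.

Lemma intersecting_chords A B C D M : concyclic A B C D ->
  collinear A C M -> collinear B D M -> A != C -> B != D ->
  dot (A - M) (C - M) = dot (B - M) (D - M).
Proof.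
case=> x [y [z [r]]] /=; set c := _ + _ => -[hA hB hC hD] hACM hBDM nAC nBD.
have [t ht] := parallel_scale (diff_neq0 nAC) (parallel_sym hACM).
have [t' ht'] := parallel_scale (diff_neq0 nBD) (parallel_sym hBDM).
by rewrite (chord_power hA hC ht) (chord_power hB hD ht').
Qed.

Lemma opposite_edges A B C D M (rho sig : R) :
  concyclic A B C D -> diag_point A B C D M -> A != C -> B != D ->
  C - M = rho *: (A - M) -> D - M = sig *: (B - M) ->
  sqnorm (C - D) = rho * sig * sqnorm (B - A).
Proof.
move=> hcirc [hACM hBDM] nAC nBD hC hD.
have := intersecting_chords hcirc hACM hBDM nAC nBD; rewrite hC hD !dotZr.
have -> : C - D = rho *: (A - M) - sig *: (B - M) by rewrite -hC -hD; vec_ring.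
have -> : B - A = (B - M) - (A - M) by vec_ring.
move: (A - M) (B - M) => u w.
rewrite /sqnorm !(dotDl, dotDr, dotZl, dotZr, dotNl, dotNr) (dotC w u) => hp.
apply/eqP; rewrite -subr_eq0; apply/eqP.
transitivity ((rho - sig) * (rho * dot u u - sig * dot w w)); first ring.
by rewrite hp subrr mulr0.
Qed.
End Circle.

Lemma int_shift_ind (P : int -> Prop) :
  P 0 -> (forall n, P n <-> P (n + 1)) -> forall n, P n.
Proof.
move=> P0 PS; elim/int_rect => [//|n Pn|n Pn].
- by rewrite -addn1 PoszD; apply: (PS _).1.
- by apply: (PS _).2; rewrite (_ : - n.+1%:Z + 1 = - n%:Z) // intS; ring.
Qed.

Lemma dvdz2_addr1 (n : int) : (2 %| n + 1)%Z = ~~ (2 %| n)%Z.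
Proof.
case: n => k; rewrite !dvdzE.
  by rewrite -PoszD addn1 /= -[(1 + 1)%N]/2%N !dvdn2 !oddS !negbK.
case: k => [|k] //.
have -> : Negz k.+1 + 1 = Negz k by rewrite !NegzE intS opprD addrC addNKr intS.
by rewrite /= -[(1 + 1)%N]/2%N !dvdn2 !oddS !negbK.
Qed.

Section Lattice.
Variable m : nat.
Local Notation lat := 'rV[int]_m.
Implicit Types (u v : lat).

Lemma shift_coord u (i l : 'I_m) : (u + e i) 0 l = u 0 l + (l == i)%:R.
Proof. by rewrite !mxE. Qed.

Lemma black0 : black (0 : lat).
Proof. by rewrite /black big1 // => k _; rewrite mxE. Qed.

Lemma black_shift u (i : 'I_m) : black (u + e i) = ~~ black u.
Proof.
rewrite /black -dvdz2_addr1; congr (_ %| _)%Z.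
under eq_bigr do rewrite shift_coord.
rewrite big_split /=; congr (_ + _).
by rewrite (bigD1 i) //= eqxx big1 ?addr0 // => k /negbTE ->.
Qed.

Lemma shift_invariant_const (T : Type) (phi : lat -> T) :
  (forall i u, phi (u + e i) = phi u) -> forall u, phi u = phi 0.
Proof.
move=> hphi.
have line i u : forall n : int, phi (u + n *: e i) = phi u.
  apply: int_shift_ind; first by rewrite scale0r addr0.
  by move=> n; rewrite scalerDl scale1r addrA hphi.
move=> u; rewrite [u]row_sum_delta.
elim/big_rec: _ => [//|j v _ IH]; rewrite addrC.
exact: etrans (line j v (u 0 j)) IH.
Qed.

Lemma two_colour_const (T : Type) (r : lat -> T) (i0 i1 : 'I_m) : i0 != i1 ->
  (forall u (i j : 'I_m), i != j -> r (u + e i + e j) = r u /\ r (u + e j) = r (u + e i)) ->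
  forall u, r u = if black u then r 0 else r (e i0).
Proof.
move=> n01 hr; have n10 : i1 != i0 by rewrite eq_sym.
have rsh v (i : 'I_m) : r (v + e i) = r (v + e i0).
  by have [->//|ne] := eqVneq i i0; case: (hr v i i0 ne).
have r2 v (i : 'I_m) : r (v + e i + e i0) = r v.
  have [->|ne] := eqVneq i i0; last by case: (hr v i i0 ne).
  have [hdiag _] := hr (v + e i0 - e i1) i1 i0 n10.
  have -> : v + e i0 + e i0 = v + e i0 - e i1 + e i1 + e i0 by rewrite subrK.
  by rewrite hdiag (addrAC v) -(rsh (v - e i1) i1) subrK.
(* psi u lists the values at u and u + e_i0, black point first *)
pose psi u := if black u then (r u, r (u + e i0)) else (r (u + e i0), r u).
have psi_const : forall u, psi u = psi 0.
  apply: shift_invariant_const => i v.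
  by rewrite /psi black_shift; case: (black v); rewrite /= rsh r2.
move=> u; have := psi_const u; rewrite /psi black0 add0r.
by case: (black u) => -[].
Qed.
End Lattice.

Section LineProduct.
Variable R : realFieldType.
Implicit Types (g : int -> R).

(* The discrete potential along Z of the multiplicative increments g:
   line_prod g 0 = 1 and line_prod g (n + 1) = g n * line_prod g n. *)
Definition line_prod g (n : int) : R :=
  match n with
  | Posz k => \prod_(t < k) g t%:Z
  | Negz k => (\prod_(t < k.+1) g (Negz t))^-1
  end.

Lemma line_prod_neq0 g : (forall t, g t != 0) -> forall n, line_prod g n != 0.
Proof. by move=> gn [k|k] /=; rewrite ?invr_eq0; apply/prodf_neq0 => t _. Qed.

Lemma line_prod_succ g : (forall t, g t != 0) ->
  forall n, line_prod g (n + 1) = g n * line_prod g n.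
Proof.
move=> gn [k|[|k]].
- by rewrite -PoszD addn1 /= big_ord_recr /= mulrC.
- by rewrite /= big_ord0 big_ord1 divff.
- have -> : Negz k.+1 + 1 = Negz k by rewrite !NegzE intS opprD addrC addNKr intS.
  by rewrite /= [in RHS]big_ord_recr /= invfM mulrCA mulfV // mulr1.
Qed.

Lemma line_prod_transport g g' (H : int -> R) :
  (forall t, g t != 0) -> (forall t, g' t != 0) ->
  (forall t, g t * H (t + 1) = H t * g' t) ->
  forall n, line_prod g' n * H 0 = line_prod g n * H n.
Proof.
move=> gn g'n hH; apply: int_shift_ind; first by rewrite /= !big_ord0.
move=> n; rewrite !line_prod_succ //.
have -> : g n * line_prod g n * H (n + 1) = g' n * (line_prod g n * H n).
  by rewrite mulrAC hH; ring.
by rewrite -mulrA; split=> [->|/mulfI]; last apply.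
Qed.
End LineProduct.

(* Integration of a closed multiplicative 1-form on Z^m: potentials are built
   coordinate by coordinate, integrating along the last coordinates first. *)
Section Integration.
Variables (R : realFieldType) (m : nat) (h : 'I_m -> 'rV[int]_m -> R).
Local Notation lat := 'rV[int]_m.
Implicit Types (u : lat).
Hypothesis h_neq0 : forall i u, h i u != 0.
Hypothesis h_closed : forall i j u, h i u * h j (u + e i) = h j u * h i (u + e j).

Definition trunc (k : nat) u : lat := \row_l (if (k <= l)%N then u 0 l else 0).

Lemma trunc0 u : trunc 0 u = u.
Proof. by apply/rowP => l; rewrite mxE. Qed.

Lemma trunc_shift k u (i : 'I_m) :
  trunc k (u + e i) = if (k <= i)%N then trunc k u + e i else trunc k u.
Proof.
apply/rowP => l; case: ifP => hk; rewrite !mxE;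
  case: (eqVneq l i) => [->|nli]; rewrite ?hk ?eqxx ?(negbTE nli) ?addr0 //.
Qed.

Lemma trunc_split (i : 'I_m) u : trunc i u = trunc i.+1 u + u 0 i *: e i.
Proof.
apply/rowP => l; rewrite !mxE eqxx mulr_natr.
case: (eqVneq l i) => [->|nli]; first by rewrite leqnn ltnn add0r.
have nil : (nat_of_ord i != l) by rewrite eq_sym.
by rewrite ltn_neqAle nil addr0.
Qed.

Definition coord_factor (l : 'I_m) u : R :=
  line_prod (fun t : int => h l (trunc l.+1 u + t *: e l)) (u 0 l).

Definition potential (k : nat) u : R := \prod_(l : 'I_m | (k <= l)%N) coord_factor l u.

Lemma coord_factor_neq0 l u : coord_factor l u != 0.
Proof. exact: line_prod_neq0. Qed.

(* How the coordinate factors change under a unit step in direction e_i; in the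
   case l < i the change is compensated by closedness of h ([line_prod_transport]). *)
Lemma coord_factor_shift_lt (l i : 'I_m) u : (i < l)%N ->
  coord_factor l (u + e i) = coord_factor l u.
Proof.
move=> hil; rewrite /coord_factor trunc_shift leqNgt ltnS (ltnW hil) /= shift_coord.
by rewrite (_ : l == i = false) ?addr0 //; apply/negbTE; rewrite neq_ltn hil orbT.
Qed.

Lemma coord_factor_shift_eq (i : 'I_m) u :
  coord_factor i (u + e i) = h i (trunc i u) * coord_factor i u.
Proof.
by rewrite /coord_factor trunc_shift ltnn shift_coord eqxx line_prod_succ // trunc_split.
Qed.

Lemma coord_factor_shift_gt (l i : 'I_m) u : (l < i)%N ->
  coord_factor l (u + e i) * h i (trunc l.+1 u) = coord_factor l u * h i (trunc l u).
Proof.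
move=> hli; rewrite /coord_factor trunc_shift hli shift_coord.
rewrite (_ : l == i = false) ?addr0; last by apply/negbTE; rewrite neq_ltn hli.
rewrite [trunc l u]trunc_split.
set b := trunc l.+1 u.
have := @line_prod_transport R (fun t => h l (b + t *: e l))
  (fun t => h l (b + e i + t *: e l)) (fun t => h i (b + t *: e l)) (fun t => h_neq0 _ _)
  (fun t => h_neq0 _ _).
rewrite scale0r addr0; apply => t.
by rewrite scalerDl scale1r addrA h_closed addrAC.
Qed.

Lemma potential_split k (hk : (k < m)%N) u :
  potential k u = coord_factor (Ordinal hk) u * potential k.+1 u.
Proof.
rewrite /potential (bigD1 (Ordinal hk)) //=; congr (_ * _).
apply: eq_bigl => l; rewrite [RHS]ltn_neqAle andbC; congr (_ && _).
by rewrite eq_sym -(inj_eq val_inj).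
Qed.

Lemma potential_shift_lt k (i : 'I_m) u : (i < k)%N -> potential k (u + e i) = potential k u.
Proof.
move=> hik; apply: eq_bigr => l hkl.
by apply: coord_factor_shift_lt; apply: leq_trans hik hkl.
Qed.

Lemma potential_shift (i : 'I_m) u k : (k <= i)%N ->
  potential k (u + e i) = h i (trunc k u) * potential k u.
Proof.
move=> hki; rewrite -(subKn hki); elim: (i - k)%N (leq_subr k i) => [|d IH] hd.
  rewrite subn0 !(potential_split (ltn_ord i)) potential_shift_lt //.
  by rewrite (_ : Ordinal (ltn_ord i) = i) ?coord_factor_shift_eq ?mulrA //; apply: val_inj.
have hk : (i - d.+1 < m)%N by have := ltn_ord i; lia.
have hlt : (i - d.+1 < i)%N by lia.
rewrite !(potential_split hk) -subSn // subSS IH ?(ltnW hd) //.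
by rewrite -(subnSK hd) mulrA coord_factor_shift_gt // [RHS]mulrCA -mulrA.
Qed.

Lemma closed_form_integrable :
  exists w : lat -> R, (forall u, w u != 0) /\ forall i u, w (u + e i) = h i u * w u.
Proof.
exists (potential 0); split=> [u|i u].
  by apply/prodf_neq0 => l _; exact: coord_factor_neq0.
by rewrite potential_shift // trunc0.
Qed.
End Integration.

Lemma exists_other_index (m : nat) (i : 'I_m) : (2 <= m)%N -> exists j : 'I_m, i != j.
Proof.
move=> hm; have hm0 : (0 < m)%N by apply: leq_trans hm.
have [-> | ne] := eqVneq i (Ordinal hm0); last by exists (Ordinal hm0).
by exists (Ordinal hm).
Qed.

Lemma qnet_edge_neq0 (R : realFieldType) (m N : nat) (g : 'rV[int]_m -> 'rV[R]_N) :
  (2 <= m)%N -> Qnet g -> forall i u, g (u + e i) - g u != 0.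
Proof.
move=> hm hg i u; have [j nij] := exists_other_index i hm.
by have [_ [[ne _] _ _]] := hg u i j nij; apply: diff_neq0; apply/eqP.
Qed.

Lemma div_swap (R : fieldType) (a b c d : R) : a != 0 -> b != 0 -> d != 0 ->
  a / b = c / d -> c / a = d / b.
Proof.
move=> a0 b0 d0 /eqP; rewrite eqr_div // => /eqP h.
by apply/eqP; rewrite eqr_div // -h mulrC.
Qed.

Section ScaleFunctions.
Variables (R : realFieldType) (m N : nat) (f : 'rV[int]_m -> 'rV[R]_N).
Local Notation lat := 'rV[int]_m.

Lemma rescale_neq0 (s : lat -> R) lam mu : (forall u, s u != 0) -> lam != 0 -> mu != 0 ->
  forall u, rescale s lam mu u != 0.
Proof. by move=> s0 hl hmu u; rewrite /rescale mulf_neq0 //; case: ifP. Qed.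

(* Multiplying s by constants on black and on white points keeps the diagonal
   ratios, since f and f_ij (resp. f_i and f_j) have the same colour. *)
Lemma diag_ratio_rescale (s : lat -> R) lam mu : (forall u, s u != 0) ->
  lam != 0 -> mu != 0 -> diag_ratio f s -> diag_ratio f (rescale s lam mu).
Proof.
move=> s0 hl hmu hs u i j nij M hM; have [-> ->] := hs u i j nij M hM.
have k0 b : (if b then lam else mu) != 0 by case: b.
by rewrite /rescale !black_shift negbK; split; congr (_ *: _); field; rewrite k0 s0.
Qed.

Lemma diag_ratio_unique (s s' : lat -> R) : (2 <= m)%N -> Qnet f ->
  (forall u, s u != 0) -> (forall u, s' u != 0) -> diag_ratio f s -> diag_ratio f s' ->
  exists lam mu : R, [/\ lam != 0, mu != 0 & s' = rescale s lam mu].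
Proof.
move=> hm hf s0 s'0 hs hs'; pose r u := s' u / s u.
have r0 u : r u != 0 by rewrite mulf_neq0 // invr_eq0.
have hr u (i j : 'I_m) : i != j -> r (u + e i + e j) = r u /\ r (u + e j) = r (u + e i).
  move=> nij; have [_ [_ _ [M [hM nMA nMB _ _]]]] := hf u i j nij.
  have [a1 a2] := hs u i j nij M hM; have [b1 b2] := hs' u i j nij M hM.
  have e1 := scalel_inj (diff_neq0 (introN eqP nMA)) (etrans (esym a1) b1).
  have e2 := scalel_inj (diff_neq0 (introN eqP nMB)) (etrans (esym a2) b2).
  by split; [apply: div_swap e1 | apply: div_swap e2].
have hm0 : (0 < m)%N by apply: leq_trans hm.
have n01 : Ordinal hm0 != Ordinal hm by [].
have hcol := two_colour_const n01 hr.
exists (r 0), (r (e (Ordinal hm0))); split=> //.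
by apply: functional_extensionality => u; rewrite /rescale -hcol /r divfK.
Qed.

Lemma alpha_edge_labelling (s : lat -> R) : circular f -> (forall u, s u != 0) ->
  diag_ratio f s -> edge_labelling (alpha f s).
Proof.
move=> [hf hcirc] s0 hs i j u nij; rewrite /alpha -addrA (addrC (e j)) addrA.
have [_ [[_ [nAC [_ [_ [nBD _]]]]] _ [M [hM _ _ _ _]]]] := hf u i j nij.
have [hC hD] := hs u i j nij M hM.
rewrite (opposite_edges (hcirc u i j nij) hM (introN eqP nAC) (introN eqP nBD) hC hD).
by field; rewrite !s0.
Qed.

Lemma sqnorm_alpha (s : lat -> R) : (forall u, s u != 0) ->
  forall u i, sqnorm (f (u + e i) - f u) = alpha f s i u * (s u * s (u + e i)).
Proof. by move=> s0 u i; rewrite /alpha divfK // mulf_neq0. Qed.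

(* Each edge joins a black and a white point, so alpha scales by (lam mu)^-1. *)
Lemma alpha_rescale (s : lat -> R) : (forall u, s u != 0) ->
  forall lam mu, lam != 0 -> mu != 0 ->
  forall i u, alpha f (rescale s lam mu) i u = (lam * mu)^-1 * alpha f s i u.
Proof.
move=> s0 lam mu hl hmu i u; have := s0 u; have := s0 (u + e i).
by rewrite /alpha /rescale black_shift; case: (black u) => /= h1 h2; field; rewrite h1 h2 hl hmu.
Qed.
End ScaleFunctions.

Section KoenigsNet.
Variables (R : realFieldType) (m N : nat) (f fs : 'rV[int]_m -> 'rV[R]_N).
Local Notation lat := 'rV[int]_m.

Definition dual_net : Prop :=
  forall (u : lat) (i j : 'I_m), i != j ->
    dual_quads (f u) (f (u + e i)) (f (u + e i + e j)) (f (u + e j))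
               (fs u) (fs (u + e i)) (fs (u + e i + e j)) (fs (u + e j)).

Definition edge_coef (i : 'I_m) (u : lat) : R :=
  dot (fs (u + e i) - fs u) (f (u + e i) - f u) / sqnorm (f (u + e i) - f u).

Lemma dual_edge : (2 <= m)%N -> Qnet f -> dual_net ->
  forall i u, fs (u + e i) - fs u = edge_coef i u *: (f (u + e i) - f u).
Proof.
move=> hm hf hdual i u; have [j nij] := exists_other_index i hm.
have [hpar _] := hdual u i j nij.
exact: parallel_coef (qnet_edge_neq0 hm hf i u) hpar.
Qed.

Lemma edge_coef_neq0 : (2 <= m)%N -> Qnet f -> Qnet fs -> dual_net ->
  forall i u, edge_coef i u != 0.
Proof.
move=> hm hf hfs hdual i u; apply: contraNneq (qnet_edge_neq0 hm hfs i u) => c0.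
by rewrite dual_edge // c0 scale0r.
Qed.

Lemma koenigs_net_quad : (2 <= m)%N -> Qnet f -> Qnet fs -> dual_net ->
  forall u (i j : 'I_m), i != j ->
  edge_coef i u * edge_coef i (u + e j) = edge_coef j (u + e i) * edge_coef j u /\
  forall M, diag_point (f u) (f (u + e i)) (f (u + e i + e j)) (f (u + e j)) M ->
    f (u + e i + e j) - M = (edge_coef i u / edge_coef j (u + e i)) *: (f u - M) /\
    f (u + e j) - M = (edge_coef j (u + e i) / edge_coef i (u + e j)) *: (f (u + e i) - M).
Proof.
move=> hm hf hfs hdual u i j nij.
have [hpl hnd] := hf u i j nij.
have [_ [_ [_ [_ [hdiag _]]]]] := hdual u i j nij.
have hDC : fs (u + e i + e j) - fs (u + e j) =
    edge_coef i (u + e j) *: (f (u + e i + e j) - f (u + e j)).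
  by rewrite addrAC dual_edge.
have c0 := edge_coef_neq0 hm hf hfs hdual.
exact: koenigs_quad hpl hnd (dual_edge hm hf hdual i u)
  (dual_edge hm hf hdual j (u + e i)) hDC (dual_edge hm hf hdual j u) hdiag (c0 _ _) (c0 _ _).
Qed.

(* The scale function: nu u * nu (u + e_i) * c_i(u) = 1.  Writing nu = w on black
   and w^-1 on white points, this is w (u + e_i) = c_i(u)^(+-1) w u, and the
   Koenigs property says exactly that these increments form a closed 1-form. *)
Lemma conjugate_scale : (2 <= m)%N -> Qnet f -> Qnet fs -> dual_net ->
  exists nu : lat -> R, (forall u, nu u != 0) /\
    forall i u, nu u * nu (u + e i) * edge_coef i u = 1.
Proof.
move=> hm hf hfs hdual; have c0 := edge_coef_neq0 hm hf hfs hdual.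
pose h i u := if black u then edge_coef i u else (edge_coef i u)^-1.
have h0 i u : h i u != 0 by rewrite /h; case: ifP; rewrite ?invr_eq0.
have hclosed i j u : h i u * h j (u + e i) = h j u * h i (u + e j).
  have [-> // | nij] := eqVneq i j.
  have [hK _] := koenigs_net_quad hm hf hfs hdual u nij.
  rewrite /h !black_shift; case: (black u) => /=; apply/eqP.
    by rewrite !eqr_div // hK mulrC.
  by rewrite ![_^-1 * _]mulrC !eqr_div // -hK mulrC.
have [w [w0 hw]] := closed_form_integrable h0 hclosed.
exists (fun u => if black u then w u else (w u)^-1); split=> [u|i u].
  by case: ifP; rewrite ?invr_eq0.
by rewrite black_shift hw /h; case: (black u) => /=; field; rewrite w0 c0.
Qed.

Lemma diag_ratio_of_scale (nu : lat -> R) : (2 <= m)%N -> Qnet f -> Qnet fs -> dual_net ->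
  (forall u, nu u != 0) -> (forall i u, nu u * nu (u + e i) * edge_coef i u = 1) ->
  diag_ratio f nu.
Proof.
move=> hm hf hfs hdual nu0 hnu u i j nij M hM.
have ce k v : edge_coef k v = (nu v * nu (v + e k))^-1.
  apply: (mulfI (mulf_neq0 (nu0 v) (nu0 (v + e k)))).
  by rewrite hnu mulfV // mulf_neq0.
have [_ hdiag] := koenigs_net_quad hm hf hfs hdual u nij.
have [-> ->] := hdiag M hM.
by rewrite !ce (addrAC u (e j)); split; congr (_ *: _); field; rewrite !nu0.
Qed.
End KoenigsNet.

Theorem mainTheorem15 (R : realFieldType) (m N : nat)
    (f : 'rV[int]_m -> 'rV[R]_N) (hm : (2 <= m)%N) :
  isothermic f ->
  (exists s : 'rV[int]_m -> R,
      (forall u, s u != 0) /\ diag_ratio f s /\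
      (forall s' : 'rV[int]_m -> R,
         ((forall u, s' u != 0) /\ diag_ratio f s') <->
         (exists lam mu : R, [/\ lam != 0, mu != 0 & s' = rescale s lam mu]))) /\
  (forall s : 'rV[int]_m -> R, (forall u, s u != 0) -> diag_ratio f s ->
      [/\ edge_labelling (alpha f s),
          (forall (u : 'rV[int]_m) (i : 'I_m),
             sqnorm (f (u + e i) - f u) = alpha f s i u * (s u * s (u + e i))) &
          (forall lam mu : R, lam != 0 -> mu != 0 ->
             forall (i : 'I_m) (u : 'rV[int]_m),
               alpha f (rescale s lam mu) i u = (lam * mu)^-1 * alpha f s i u)]).
Proof.
move=> [hcirc [hf [fs [hfs hdual]]]].
have [nu [nu0 hnu]] := conjugate_scale hm hf hfs hdual.
have diag_nu := diag_ratio_of_scale hm hf hfs hdual nu0 hnu.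
split.
  exists nu; split=> //; split=> // s'.
  split=> [[s'0 hs'] | [lam [mu [hl hmu ->]]]].
    exact: diag_ratio_unique hm hf nu0 s'0 diag_nu hs'.
  by split; [apply: rescale_neq0 | apply: diag_ratio_rescale].
move=> s s0 hs; split.
- exact: alpha_edge_labelling hcirc s0 hs.
- exact: sqnorm_alpha s0.
- exact: alpha_rescale s0.
Qed.
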